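(* Under the hypotheses and notation of the context (PQRS-form with $m\ge1$ and $S$ invertible self-adjoint), the scattering matrix admits, for all sufficiently large $k>0$, the convergent expansion $$\mathcal S(k)=-I^{(n)}+2M_Q\left(I^{(a)}+RR^*+QQ^*\right)^{-1}M_Q^*+2X(X^*X)^{-1}X^*+2X\sum_{j=1}^\infty\left(\tfrac{1}{\mathrm ik}\right)^j\left[(X^*X)^{-1}S\right]^j(X^*X)^{-1}X^*,$$ and $$\lim_{k\to\infty}\mathcal S(k)=I^{(n)}-2M_P\left[I^{(b)}+P^*P+(RP-Q)^*(RP-Q)\right]^{-1}M_P^*.$$
   Context: $I^{(j)}$ denotes the $j\times j$ identity matrix. Let $0\le r_A,r_B\le n$ with $m=r_A+r_B-n\ge1$, $a=n-r_A$, $b=n-r_B$, $S\in\mathbb C^{m\times m}$ invertible self-adjoint, $P\in\mathbb C^{m\times b}$, $Q\in\mathbb C^{a\times b}$, $R\in\mathbb C^{a\times m}$. The vertex coupling is given by the PQRS-form $B_{PQRS}\Psi'=A_{PQRS}\Psi$ with (block sizes $m,a,b$) $$B_{PQRS}=\begin{pmatrix} I^{(m)} & 0 & P\\ R & I^{(a)} & Q\\ 0&0&0\end{pmatrix},\qquad A_{PQRS}=\begin{pmatrix} S & -SR^* & 0\\ 0&0&0\\ -P^* & (RP-Q)^* & I^{(b)}\end{pmatrix};$$ its scattering matrix is $\mathcal S(k)=-(A+\mathrm ikB)^{-1}(A-\mathrm ikB)$, $k>0$, with $A=-A_{PQRS}$, $B=B_{PQRS}$. Further, $$M_P=\begin{pmatrix}-P\\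 RP-Q\\ I^{(b)}\end{pmatrix},\quad M_Q=\begin{pmatrix}R^*\\ I^{(a)}\\ Q^*\end{pmatrix},\quad X=\begin{pmatrix}I^{(m)}\\0\\P^*\end{pmatrix}-M_Q\left(I^{(a)}+RR^*+QQ^*\right)^{-1}(R+QP^* ).$$ *)

From HB Require Import structures.
From mathcomp Require Import all_boot all_order all_algebra.
Set Implicit Arguments. Unset Strict Implicit. Unset Printing Implicit Defensive.
Import Order.TTheory GRing.Theory Num.Theory.
Local Open Scope ring_scope.

Definition adjmx (C : numClosedFieldType) (p q : nat) (A : 'M[C]_(p, q)) : 'M[C]_(q, p) :=
  (map_mx Num.conj A)^T.

Definition mx_cvg (C : numClosedFieldType) (p q : nat) (u : nat -> 'M[C]_(p, q))
  (L : 'M[C]_(p, q)) : Prop :=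
  forall eps : C, 0 < eps -> exists N : nat, forall N' : nat, (N <= N')%N ->
    forall i j, `|u N' i j - L i j| < eps.

Definition mx_lim_infty (C : numClosedFieldType) (p q : nat) (f : C -> 'M[C]_(p, q))
  (L : 'M[C]_(p, q)) : Prop :=
  forall eps : C, 0 < eps -> exists K : C, K \is Num.real /\
    forall k : C, k \is Num.real -> K < k -> forall i j, `|f k i j - L i j| < eps.

Section PQRS.
Variables (C : numClosedFieldType) (m a b : nat).
Variables (P : 'M[C]_(m, b)) (Q : 'M[C]_(a, b)) (R : 'M[C]_(a, m)) (S : 'M[C]_m).

(* n = m + a + b; block sizes m, a, b. *)
Definition B_PQRS : 'M[C]_(m + a + b) :=
  block_mx (block_mx 1%:M 0 R 1%:M) (col_mx P Q) 0 0.

Definition A_PQRS : 'M[C]_(m + a + b) :=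
  block_mx (block_mx S (- (S *m adjmx R)) 0 0) 0
           (row_mx (- adjmx P) (adjmx (R *m P - Q))) 1%:M.

(* Scattering matrix S(k) = -(A + i k B)^{-1} (A - i k B), A = -A_PQRS, B = B_PQRS. *)
Definition scat (k : C) : 'M[C]_(m + a + b) :=
  - (invmx (- A_PQRS + ('i * k) *: B_PQRS) *m (- A_PQRS - ('i * k) *: B_PQRS)).

Definition M_P : 'M[C]_(m + a + b, b) := col_mx (col_mx (- P) (R *m P - Q)) 1%:M.
Definition M_Q : 'M[C]_(m + a + b, a) := col_mx (col_mx (adjmx R) 1%:M) (adjmx Q).

Definition G_Q : 'M[C]_a := 1%:M + R *m adjmx R + Q *m adjmx Q.

Definition X_PQRS : 'M[C]_(m + a + b, m) :=
  col_mx (col_mx 1%:M 0) (adjmx P) - M_Q *m invmx G_Q *m (R + Q *m adjmx P).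

Definition Y_PQRS : 'M[C]_m := invmx (adjmx X_PQRS *m X_PQRS).

Definition scat_partial (k : C) (N : nat) : 'M[C]_(m + a + b) :=
  - 1%:M + 2%:R *: (M_Q *m invmx G_Q *m adjmx M_Q)
  + 2%:R *: (X_PQRS *m Y_PQRS *m adjmx X_PQRS)
  + 2%:R *: (X_PQRS *m (\sum_(1 <= j < N.+1)
                ((('i * k)^-1) ^+ j *: (Y_PQRS *m S) ^+ j))
             *m Y_PQRS *m adjmx X_PQRS).

Definition scat_limit : 'M[C]_(m + a + b) :=
  1%:M - 2%:R *: (M_P *m invmx (1%:M + adjmx P *m P + adjmx (R *m P - Q) *m (R *m P - Q))
                      *m adjmx M_P).
End PQRS.

From HB Require Import structures.
From mathcomp Require Import all_boot all_order all_algebra ring.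
Import Order.TTheory GRing.Theory Num.Theory.
Local Open Scope ring_scope.
Set Implicit Arguments. Unset Strict Implicit. Unset Printing Implicit Defensive.

(* Let U = [X | M_Q | M_P]. Its three column blocks are mutually orthogonal
   with invertible Gram matrices, so U is invertible and the orthogonal
   projections Pi_X, Pi_Q, Pi_P onto them add up to the identity. A annihilates
   M_Q, B annihilates M_P, and on X both act through the first block row e:
   A X = e S and B X = e X^*X. Checking
   the three blocks separately shows (-A + ikB) E = A + ikB for
     E = -I + 2 Pi_Q + 2 X (I - T)^-1 (X^*X)^-1 X^*,  T = (ik)^-1 (X^*X)^-1 S,
   and (-A + ikB) U is block upper triangular with invertible diagonal, so
   S(k) = E once |T| < 1. Expanding (I - T)^-1 as a Neumann series, the remainder
   after N terms is O(|T|^(N+1)) with |T| = O(1/k); the same estimate with N = 0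
   gives S(k) -> -I + 2 Pi_Q + 2 Pi_X = I - 2 Pi_P. *)

Section Adjoint.
Variable C : numClosedFieldType.
Implicit Types p q r : nat.

Lemma adjmxM p q r (A : 'M[C]_(p, q)) (B : 'M[C]_(q, r)) :
  adjmx (A *m B) = adjmx B *m adjmx A.
Proof. by rewrite /adjmx map_mxM trmx_mul. Qed.

Lemma adjmxK p q (A : 'M[C]_(p, q)) : adjmx (adjmx A) = A.
Proof. by apply/matrixP => i j; rewrite !mxE conjCK. Qed.

Lemma adjmxD p q (A B : 'M[C]_(p, q)) : adjmx (A + B) = adjmx A + adjmx B.
Proof. by apply/matrixP => i j; rewrite !mxE rmorphD. Qed.

Lemma adjmxN p q (A : 'M[C]_(p, q)) : adjmx (- A) = - adjmx A.
Proof. by apply/matrixP => i j; rewrite !mxE rmorphN. Qed.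

Lemma adjmxB p q (A B : 'M[C]_(p, q)) : adjmx (A - B) = adjmx A - adjmx B.
Proof. by rewrite adjmxD adjmxN. Qed.

Lemma adjmx0 p q : adjmx (0 : 'M[C]_(p, q)) = 0.
Proof. by apply/matrixP => i j; rewrite !mxE rmorph0. Qed.

Lemma adjmx1 p : adjmx (1%:M : 'M[C]_p) = 1%:M.
Proof. by rewrite /adjmx map_mx1 trmx1. Qed.

Lemma adjmx_col p1 p2 q (A : 'M[C]_(p1, q)) (B : 'M[C]_(p2, q)) :
  adjmx (col_mx A B) = row_mx (adjmx A) (adjmx B).
Proof. by rewrite /adjmx map_col_mx tr_col_mx. Qed.

Lemma adjmx_row p q1 q2 (A : 'M[C]_(p, q1)) (B : 'M[C]_(p, q2)) :
  adjmx (row_mx A B) = col_mx (adjmx A) (adjmx B).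
Proof. by rewrite /adjmx map_row_mx tr_row_mx. Qed.

Lemma adjmx_mul_eq0C p q r (A : 'M[C]_(p, q)) (B : 'M[C]_(p, r)) :
  adjmx A *m B = 0 -> adjmx B *m A = 0.
Proof. by move=> AB0; rewrite -[A]adjmxK -adjmxM AB0 adjmx0. Qed.

Lemma mul_adjmx_self_ge0 p (v : 'rV[C]_p) : 0 <= (v *m adjmx v) 0 0.
Proof.
rewrite mxE; apply: sumr_ge0 => j _.
by rewrite !mxE -normCK exprn_ge0.
Qed.

Lemma mul_adjmx_self_eq0 p (v : 'rV[C]_p) : (v *m adjmx v) 0 0 = 0 -> v = 0.
Proof.
rewrite mxE => /eqP; rewrite psumr_eq0 => [/allP v0|j _]; last first.
  by rewrite !mxE -normCK exprn_ge0.
apply/matrixP => i j; rewrite ord1 mxE.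
have := v0 j (mem_index_enum j).
by rewrite /= !mxE -normCK sqrf_eq0 normr_eq0 => /eqP.
Qed.

Lemma unitmx_1D_mul_adj p q (D : 'M[C]_(p, q)) : 1%:M + D *m adjmx D \in unitmx.
Proof.
rewrite -row_free_unit; apply: inj_row_free => v v0.
have : (v *m (1%:M + D *m adjmx D) *m adjmx v) 0 0 = 0 by rewrite v0 mul0mx mxE.
rewrite mulmxDr mulmx1 mulmxDl mxE.
have -> : v *m (D *m adjmx D) *m adjmx v = v *m D *m adjmx (v *m D).
  by rewrite adjmxM !mulmxA.
move/eqP; rewrite paddr_eq0 ?mul_adjmx_self_ge0 // => /andP[/eqP vv0 _].
exact: mul_adjmx_self_eq0.
Qed.

Lemma unitmx_adj_mul_self p q (X : 'M[C]_(p, q)) (L : 'M[C]_(q, p)) :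
  L *m X = 1%:M -> adjmx X *m X \in unitmx.
Proof.
move=> LX1; rewrite -row_free_unit; apply: inj_row_free => v v0.
have vX0 : v *m adjmx X = 0.
  apply: mul_adjmx_self_eq0.
  by rewrite adjmxM adjmxK mulmxA -(mulmxA v) v0 mul0mx mxE.
by rewrite -[v]mulmx1 -adjmx1 -LX1 adjmxM mulmxA vX0 mul0mx.
Qed.
End Adjoint.

Section EntrywiseNorm.
Variable C : numClosedFieldType.
Implicit Types p q r : nat.

Definition mxnorm p q (A : 'M[C]_(p, q)) : C := \sum_i \sum_j `|A i j|.

Lemma mxnorm_ge0 p q (A : 'M[C]_(p, q)) : 0 <= mxnorm A.
Proof. by apply: sumr_ge0 => i _; apply: sumr_ge0. Qed.

Lemma ler_mxnorm_row p q (A : 'M[C]_(p, q)) i : \sum_j `|A i j| <= mxnorm A.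
Proof.
rewrite /mxnorm (bigD1 i) //= lerDl.
by apply: sumr_ge0 => k _; apply: sumr_ge0.
Qed.

Lemma ler_mxnorm_entry p q (A : 'M[C]_(p, q)) i j : `|A i j| <= mxnorm A.
Proof.
apply: le_trans (ler_mxnorm_row A i).
by rewrite (bigD1 j) //= lerDl sumr_ge0.
Qed.

Lemma ler_mxnorm_sub_entry p q (A B : 'M[C]_(p, q)) i j :
  `|A i j - B i j| <= mxnorm (A - B).
Proof.
have -> : A i j - B i j = (A - B) i j by rewrite !mxE.
exact: ler_mxnorm_entry.
Qed.

Lemma ler_mxnormD p q (A B : 'M[C]_(p, q)) : mxnorm (A + B) <= mxnorm A + mxnorm B.
Proof.
rewrite /mxnorm -big_split /=; apply: ler_sum => i _.
by rewrite -big_split /=; apply: ler_sum => j _; rewrite mxE ler_normD.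
Qed.

Lemma mxnormZ p q c (A : 'M[C]_(p, q)) : mxnorm (c *: A) = `|c| * mxnorm A.
Proof.
rewrite /mxnorm mulr_sumr; apply: eq_bigr => i _; rewrite mulr_sumr.
by apply: eq_bigr => j _; rewrite mxE normrM.
Qed.

Lemma ler_mxnormM p q r (A : 'M[C]_(p, q)) (B : 'M[C]_(q, r)) :
  mxnorm (A *m B) <= mxnorm A * mxnorm B.
Proof.
rewrite /mxnorm mulr_suml; apply: ler_sum => i _.
apply: (@le_trans _ _ (\sum_j \sum_k `|A i k| * `|B k j|)).
  apply: ler_sum => j _; rewrite mxE; apply: le_trans (ler_norm_sum _ _ _) _.
  by apply: ler_sum => k _; rewrite normrM.
rewrite exchange_big /= mulr_suml; apply: ler_sum => k _.
by rewrite -mulr_sumr ler_wpM2l ?ler_mxnorm_row.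
Qed.

Lemma ler_mxnormX p (T : 'M[C]_p) j : mxnorm (T ^+ j.+1) <= mxnorm T ^+ j.+1.
Proof.
elim: j => [|j IHj]; first by rewrite !expr1.
rewrite exprS [mxnorm T ^+ _]exprS -mulmxE; apply: le_trans (ler_mxnormM _ _) _.
by rewrite ler_wpM2l ?mxnorm_ge0.
Qed.

Lemma mxnorm_eq0 p q (A : 'M[C]_(p, q)) : mxnorm A = 0 -> A = 0.
Proof.
move=> A0; apply/matrixP => i j; rewrite mxE; apply/eqP; rewrite -normr_eq0.
by rewrite eq_le normr_ge0 andbT -A0 ler_mxnorm_entry.
Qed.
End EntrywiseNorm.

Section NeumannSeries.
Variables (C : numClosedFieldType) (m : nat).
Implicit Types T : 'M[C]_m.

Lemma unitmx_1B_small T : mxnorm T < 1 -> 1%:M - T \in unitmx.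
Proof.
move=> T_lt1; rewrite -row_free_unit; apply: inj_row_free => v v0.
have vT : v *m T = v by apply/eqP; rewrite eq_sym -subr_eq0 -{1}[v]mulmx1 -mulmxBr v0.
apply: mxnorm_eq0; apply/eqP; apply: contraT => v_neq0.
have v_gt0 : 0 < mxnorm v by rewrite lt0r v_neq0 mxnorm_ge0.
by have := ler_mxnormM v T; rewrite vT lt_geF // gtr_pMr.
Qed.

Lemma invmx_1B_resolvent T :
  1%:M - T \in unitmx -> invmx (1%:M - T) = 1%:M + T *m invmx (1%:M - T).
Proof.
by move=> uT; apply/eqP; rewrite -subr_eq -{1}[invmx _]mul1mx -mulmxBl mulmxV.
Qed.

Lemma mxnorm_invmx_1B T : mxnorm T <= 2^-1 ->
  mxnorm (invmx (1%:M - T)) <= 2%:R * mxnorm (1%:M : 'M[C]_m).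
Proof.
move=> T_small; set V := invmx (1%:M - T).
have uT : 1%:M - T \in unitmx.
  by apply: unitmx_1B_small; apply: le_lt_trans T_small _; rewrite invf_lt1 ?ltr1n.
have : mxnorm V <= mxnorm (1%:M : 'M[C]_m) + 2^-1 * mxnorm V.
  rewrite {1}/V invmx_1B_resolvent //.
  apply: le_trans (ler_mxnormD _ _) _; rewrite lerD2l.
  by apply: le_trans (ler_mxnormM _ _) _; rewrite ler_wpM2r ?mxnorm_ge0.
rewrite -lerBlDr -{1}[mxnorm V]mul1r -mulrBl.
have -> : (1 - 2^-1 : C) = 2^-1 by rewrite {1}(splitr 1) mul1r addrK.
by rewrite -ler_pdivlMl ?invr_gt0 ?ltr0n // invrK.
Qed.

Lemma mulmx_geometric_sum T N :
  (1%:M + \sum_(1 <= j < N.+1) T ^+ j) *m (1%:M - T) = 1%:M - T ^+ N.+1.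
Proof.
elim: N => [|N IHN]; first by rewrite big_geq // addr0 mul1mx expr1.
rewrite big_nat_recr //= addrA mulmxDl IHN mulmxBr mulmx1 mulmxE -exprSr.
by rewrite addrA subrK.
Qed.

Lemma scalemx_exprn (x : C) T j : (x *: T) ^+ j = x ^+ j *: T ^+ j.
Proof.
elim: j => [|j IHj]; first by rewrite !expr0 scale1r.
by rewrite !exprS IHj -!mulmxE -scalemxAl -scalemxAr scalerA.
Qed.
End NeumannSeries.

Lemma mulr_halfX_lt (R : numFieldType) (K e : R) n :
  0 <= K -> 0 < e -> K / e < n%:R -> K * 2^-1 ^+ n < e.
Proof.
move=> K_ge0 e_gt0; rewrite ltr_pdivrMr // exprVn ltr_pdivrMr ?exprn_gt0 ?ltr0n //.
move=> /lt_le_trans; apply; rewrite mulrC ler_wpM2l ?(ltW e_gt0) //.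
by rewrite -natrX ler_nat ltnW // ltn_expl.
Qed.

Definition projmx (C : numClosedFieldType) (p q : nat) (X : 'M[C]_(p, q)) : 'M[C]_p :=
  X *m invmx (adjmx X *m X) *m adjmx X.

Section OrthogonalProjection.
Variable C : numClosedFieldType.
Implicit Types p q r : nat.

Lemma projmx_id p q (X : 'M[C]_(p, q)) : adjmx X *m X \in unitmx -> projmx X *m X = X.
Proof. by move=> uX; rewrite /projmx -!mulmxA mulVmx ?mulmx1. Qed.

Lemma projmx_orth p q r (X : 'M[C]_(p, q)) (Y : 'M[C]_(p, r)) :
  adjmx X *m Y = 0 -> projmx X *m Y = 0.
Proof. by move=> XY0; rewrite /projmx -mulmxA XY0 mulmx0. Qed.

Variables p1 p2 p3 : nat.
Variables (X1 : 'M[C]_(p1 + p2 + p3, p1)) (X2 : 'M[C]_(p1 + p2 + p3, p2))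
          (X3 : 'M[C]_(p1 + p2 + p3, p3)).
Hypotheses (X12 : adjmx X1 *m X2 = 0) (X13 : adjmx X1 *m X3 = 0)
           (X23 : adjmx X2 *m X3 = 0).
Hypotheses (uX1 : adjmx X1 *m X1 \in unitmx) (uX2 : adjmx X2 *m X2 \in unitmx)
           (uX3 : adjmx X3 *m X3 \in unitmx).

Let X21 : adjmx X2 *m X1 = 0 := adjmx_mul_eq0C X12.
Let X31 : adjmx X3 *m X1 = 0 := adjmx_mul_eq0C X13.
Let X32 : adjmx X3 *m X2 = 0 := adjmx_mul_eq0C X23.

Definition row3_mx := row_mx (row_mx X1 X2) X3.

Lemma row3_mx_unit : row3_mx \in unitmx.
Proof.
have gram : adjmx row3_mx *m row3_mx = block_mx
    (block_mx (adjmx X1 *m X1) 0 0 (adjmx X2 *m X2)) 0 0 (adjmx X3 *m X3).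
  rewrite /row3_mx !adjmx_row !mul_col_mx !mul_mx_row.
  rewrite X12 X13 X23 X21 X31 X32.
  rewrite row_mx0 [RHS]block_mxEv.
  by rewrite -[0 : 'M_(p1 + p2, p3)]col_mx0 -block_mxEh !block_mxEv.
have : adjmx row3_mx *m row3_mx \in unitmx.
  by rewrite gram unitmxE !det_ublock !unitrM -!unitmxE uX1 uX2 uX3.
by rewrite unitmx_mul => /andP[].
Qed.

Lemma projmx_sum3 : projmx X1 + projmx X2 + projmx X3 = 1%:M.
Proof.
have fixU : (projmx X1 + projmx X2 + projmx X3) *m row3_mx = row3_mx.
  rewrite /row3_mx !mul_mx_row !mulmxDl !projmx_id //.
  by rewrite !projmx_orth // !addr0 !add0r.
by rewrite -[LHS](mulmxK row3_mx_unit) fixU mulmxV // row3_mx_unit.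
Qed.
End OrthogonalProjection.

Section PQRSBlocks.
Variables (C : numClosedFieldType) (m a b : nat).
Variables (P : 'M[C]_(m, b)) (Q : 'M[C]_(a, b)) (R : 'M[C]_(a, m)) (S : 'M[C]_m).

Local Notation A := (A_PQRS P Q R S).
Local Notation B := (B_PQRS P Q R).
Local Notation X := (X_PQRS P Q R).
Local Notation M_Q := (M_Q Q R).
Local Notation M_P := (M_P P Q R).
Local Notation G_Q := (G_Q Q R).

Definition emb_m : 'M[C]_(m + a + b, m) := col_mx (col_mx 1%:M 0) 0.
Definition emb_a : 'M[C]_(m + a + b, a) := col_mx (col_mx 0 1%:M) 0.
Definition emb_b : 'M[C]_(m + a + b, b) := col_mx 0 1%:M.

Definition F_PQRS : 'M[C]_(m + a + b, m) := col_mx (col_mx 1%:M 0) (adjmx P).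
Definition L_PQRS : 'M[C]_(m + a + b, m) := col_mx (col_mx 1%:M (- R)) 0.

Definition G_P : 'M[C]_b := 1%:M + adjmx P *m P + adjmx (R *m P - Q) *m (R *m P - Q).

Local Notation F := F_PQRS.
Local Notation L := L_PQRS.

Lemma adjM_Q : adjmx M_Q = row_mx (row_mx R 1%:M) Q.
Proof. by rewrite /M_Q !adjmx_col adjmx1 !adjmxK. Qed.

Lemma adjM_P : adjmx M_P = row_mx (row_mx (- adjmx P) (adjmx (R *m P - Q))) 1%:M.
Proof. by rewrite /M_P !adjmx_col adjmx1 adjmxN. Qed.

Lemma adjF : adjmx F = row_mx (row_mx 1%:M 0) P.
Proof. by rewrite /F_PQRS !adjmx_col adjmx1 adjmx0 adjmxK. Qed.

Lemma adjL : adjmx L = row_mx (row_mx 1%:M (- adjmx R)) 0.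
Proof. by rewrite /L_PQRS !adjmx_col adjmx1 adjmx0 adjmxN. Qed.

Lemma B_PQRS_factor : B = emb_m *m adjmx F + emb_a *m adjmx M_Q.
Proof.
rewrite adjF adjM_Q /emb_m /emb_a /B_PQRS !mul_col_mx !mul1mx !mul0mx !add_col_mx.
by rewrite !addr0 add0r block_mxEv row_mx0 block_mxEv -block_mxEh block_mxEv.
Qed.

Lemma A_PQRS_factor : A = emb_m *m (S *m adjmx L) + emb_b *m adjmx M_P.
Proof.
rewrite adjL adjM_P /emb_m /emb_b /A_PQRS !mul_col_mx !mul1mx !mul0mx add_col_mx.
rewrite !mul_mx_row mulmx1 mulmx0 mulmxN add0r !addr0.
rewrite [LHS]block_mxEv [block_mx S _ _ _]block_mxEv row_mx0.
by rewrite -[0 : 'M_(m + a, b)]col_mx0 -block_mxEh block_mxEv row_mx0.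
Qed.

Lemma adjM_Q_mul_M_P : adjmx M_Q *m M_P = 0.
Proof. by rewrite adjM_Q /M_P !mul_row_col mulmxN mul1mx mulmx1 addKr addNr. Qed.

Lemma adjF_mul_M_P : adjmx F *m M_P = 0.
Proof. by rewrite adjF /M_P !mul_row_col mul1mx mul0mx mulmx1 addr0 addNr. Qed.

Lemma adjL_mul_M_Q : adjmx L *m M_Q = 0.
Proof. by rewrite adjL /M_Q !mul_row_col mul1mx mulNmx mulmx1 mul0mx addr0 subrr. Qed.

Lemma adjL_mul_F : adjmx L *m F = 1%:M.
Proof. by rewrite adjL /F_PQRS !mul_row_col mul1mx mulmx0 mul0mx !addr0. Qed.

Lemma adjM_Q_mul_F : adjmx M_Q *m F = R + Q *m adjmx P.
Proof. by rewrite adjM_Q /F_PQRS !mul_row_col mulmx1 mulmx0 addr0. Qed.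

Lemma adjM_Q_mul_M_Q : adjmx M_Q *m M_Q = G_Q.
Proof. by rewrite adjM_Q /M_Q !mul_row_col mul1mx /G_Q [R *m _ + _]addrC. Qed.

Lemma adjM_P_mul_M_P : adjmx M_P *m M_P = G_P.
Proof.
by rewrite adjM_P /M_P !mul_row_col mulmx1 mulNmx mulmxN opprK /G_P addrC addrA.
Qed.

Lemma G_Q_unit : G_Q \in unitmx.
Proof.
have -> : G_Q = 1%:M + row_mx R Q *m adjmx (row_mx R Q).
  by rewrite adjmx_row mul_row_col /G_Q addrA.
exact: unitmx_1D_mul_adj.
Qed.

Lemma G_P_unit : G_P \in unitmx.
Proof.
set D := row_mx (adjmx P) (adjmx (R *m P - Q)).
have -> : G_P = 1%:M + D *m adjmx D by rewrite adjmx_row mul_row_col !adjmxK addrA.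
exact: unitmx_1D_mul_adj.
Qed.

Lemma X_PQRSE : X = F - M_Q *m invmx G_Q *m (adjmx M_Q *m F).
Proof. by rewrite adjM_Q_mul_F. Qed.

Lemma adjM_Q_mul_X : adjmx M_Q *m X = 0.
Proof.
by rewrite X_PQRSE mulmxBr !mulmxA adjM_Q_mul_M_Q mulmxV ?G_Q_unit // mul1mx subrr.
Qed.

Lemma adjL_mul_X : adjmx L *m X = 1%:M.
Proof. by rewrite X_PQRSE mulmxBr adjL_mul_F !mulmxA adjL_mul_M_Q !mul0mx subr0. Qed.

Lemma adjX_mul_M_P : adjmx X *m M_P = 0.
Proof.
rewrite X_PQRSE adjmxB mulmxBl adjF_mul_M_P !adjmxM -!mulmxA.
by rewrite adjM_Q_mul_M_P !mulmx0 subrr.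
Qed.

Lemma adjF_mul_X : adjmx F *m X = adjmx X *m X.
Proof.
have -> : F = X + M_Q *m (invmx G_Q *m (adjmx M_Q *m F)).
  by rewrite X_PQRSE -mulmxA subrK.
by rewrite adjmxD mulmxDl adjmxM -mulmxA adjM_Q_mul_X mulmx0 addr0.
Qed.

Lemma X_gram_unit : adjmx X *m X \in unitmx.
Proof. exact: unitmx_adj_mul_self adjL_mul_X. Qed.

Lemma B_mul_X : B *m X = emb_m *m (adjmx X *m X).
Proof.
by rewrite B_PQRS_factor mulmxDl -!mulmxA adjF_mul_X adjM_Q_mul_X mulmx0 addr0.
Qed.

Lemma A_mul_X : A *m X = emb_m *m S.
Proof.
rewrite A_PQRS_factor mulmxDl -!mulmxA adjL_mul_X (adjmx_mul_eq0C adjX_mul_M_P).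
by rewrite mulmx1 mulmx0 addr0.
Qed.

Lemma A_mul_M_Q : A *m M_Q = 0.
Proof.
rewrite A_PQRS_factor mulmxDl -!mulmxA adjL_mul_M_Q.
by rewrite (adjmx_mul_eq0C adjM_Q_mul_M_P) !mulmx0 addr0.
Qed.

Lemma B_mul_M_P : B *m M_P = 0.
Proof.
by rewrite B_PQRS_factor mulmxDl -!mulmxA adjF_mul_M_P adjM_Q_mul_M_P !mulmx0 addr0.
Qed.

Lemma B_mul_M_Q : B *m M_Q = emb_m *m (adjmx F *m M_Q) + emb_a *m G_Q.
Proof. by rewrite B_PQRS_factor mulmxDl -!mulmxA adjM_Q_mul_M_Q. Qed.

Lemma A_mul_M_P : A *m M_P = emb_m *m (S *m (adjmx L *m M_P)) + emb_b *m G_P.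
Proof. by rewrite A_PQRS_factor mulmxDl -!mulmxA adjM_P_mul_M_P. Qed.

Lemma adjX_mul_M_Q : adjmx X *m M_Q = 0.
Proof. exact: adjmx_mul_eq0C adjM_Q_mul_X. Qed.

Lemma M_Q_gram_unit : adjmx M_Q *m M_Q \in unitmx.
Proof. by rewrite adjM_Q_mul_M_Q G_Q_unit. Qed.

Lemma M_P_gram_unit : adjmx M_P *m M_P \in unitmx.
Proof. by rewrite adjM_P_mul_M_P G_P_unit. Qed.

Lemma row3_mx_PQRS_unit : row3_mx X M_Q M_P \in unitmx.
Proof.
exact: row3_mx_unit adjX_mul_M_Q adjX_mul_M_P adjM_Q_mul_M_P
                    X_gram_unit M_Q_gram_unit M_P_gram_unit.
Qed.

Lemma scat_limit_proj :
  scat_limit P Q R = - 1%:M + 2%:R *: projmx M_Q + 2%:R *: projmx X.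
Proof.
have sum1 := projmx_sum3 adjX_mul_M_Q adjX_mul_M_P adjM_Q_mul_M_P
                         X_gram_unit M_Q_gram_unit M_P_gram_unit.
have -> : scat_limit P Q R = 1%:M - 2%:R *: projmx M_P by rewrite /projmx adjM_P_mul_M_P.
have -> : projmx M_P = 1%:M - (projmx X + projmx M_Q).
  by rewrite -sum1 [_ + projmx M_P]addrC addrK.
have one_sub_two : 1%:M - 2%:R *: 1%:M = - 1%:M :> 'M[C]_(m + a + b).
  by rewrite scaler_nat mulr2n opprD addNKr.
rewrite scalerBr opprB addrCA one_sub_two addrC -addrA -scalerDr.
by rewrite [projmx M_Q + _]addrC.
Qed.
End PQRSBlocks.

Section ScatteringClosedForm.
Variables (C : numClosedFieldType) (m a b : nat).
Variables (P : 'M[C]_(m, b)) (Q : 'M[C]_(a, b)) (R : 'M[C]_(a, m)) (S : 'M[C]_m).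

Local Notation A := (A_PQRS P Q R S).
Local Notation B := (B_PQRS P Q R).
Local Notation X := (X_PQRS P Q R).
Local Notation Y := (Y_PQRS P Q R).
Local Notation M_Q := (M_Q Q R).
Local Notation M_P := (M_P P Q R).
Local Notation emb_m := (@emb_m C m a b).

Definition scat_T (k : C) : 'M[C]_m := ('i * k)^-1 *: (Y *m S).
Definition scat_V (k : C) : 'M[C]_m := invmx (1%:M - scat_T k).

(* The expansion of the paper with its geometric series summed. *)
Definition scat_closed (k : C) : 'M[C]_(m + a + b) :=
  - 1%:M + 2%:R *: projmx M_Q + 2%:R *: (X *m (scat_V k *m Y) *m adjmx X).

Variable k : C.
Hypotheses (k_neq0 : k != 0) (T_unit : 1%:M - scat_T k \in unitmx).

Let z := 'i * k.
Let z_neq0 : z != 0. Proof. by rewrite mulf_neq0 ?neq0Ci. Qed.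
Let E := scat_closed k.
Let V := scat_V k.

Let G := adjmx X *m X.

Lemma scat_denom_factor : z *: G - S = z *: G *m (1%:M - scat_T k).
Proof.
rewrite mulmxBr mulmx1 /scat_T -scalemxAl -scalemxAr scalerA mulfV // scale1r.
by rewrite mulmxA /Y_PQRS mulmxV ?X_gram_unit ?mul1mx.
Qed.

Lemma scat_denom_mul_X : (- A + z *: B) *m X = emb_m *m (z *: G - S).
Proof.
rewrite mulmxDl mulNmx A_mul_X -scalemxAl B_mul_X.
by rewrite [RHS]mulmxBr scalemxAr addrC.
Qed.

Lemma scat_numer_mul_X : (- A - z *: B) *m X = - (emb_m *m (z *: G + S)).
Proof.
rewrite mulmxBl mulNmx A_mul_X -scalemxAl B_mul_X.
by rewrite [in RHS]mulmxDr scalemxAr opprD addrC.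
Qed.

Lemma scat_closed_mul_X : E *m X = - X + 2%:R *: (X *m V).
Proof.
(* [X] unfolds to a difference, so distributivity is pinned to the right factor. *)
rewrite /E /scat_closed !(mulmxDl _ _ X) mulNmx mul1mx -!scalemxAl.
rewrite projmx_orth ?adjM_Q_mul_X //.
by rewrite scaler0 addr0 -!mulmxA /Y_PQRS mulVmx ?X_gram_unit ?mulmx1.
Qed.

Lemma scat_closed_mul_M_Q : E *m M_Q = M_Q.
Proof.
rewrite /E /scat_closed !(mulmxDl _ _ M_Q) mulNmx mul1mx -!scalemxAl.
rewrite projmx_id ?M_Q_gram_unit //.
by rewrite -mulmxA adjX_mul_M_Q !mulmx0 scaler0 addr0 scaler_nat mulr2n addKr.
Qed.

Lemma scat_closed_mul_M_P : E *m M_P = - M_P.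
Proof.
rewrite /E /scat_closed !(mulmxDl _ _ M_P) mulNmx mul1mx -!scalemxAl.
rewrite projmx_orth ?adjM_Q_mul_M_P //.
by rewrite -mulmxA adjX_mul_M_P !mulmx0 !scaler0 !addr0.
Qed.

Lemma scat_denom_mul_V : (z *: G - S) *m V = z *: G.
Proof. by rewrite scat_denom_factor -mulmxA mulmxV ?mulmx1. Qed.

Lemma scat_denom_mul_closed : (- A + z *: B) *m E = - (- A - z *: B).
Proof.
apply: (can_inj (mulmxK (row3_mx_PQRS_unit P Q R))) => /=.
rewrite -mulmxA /row3_mx !mul_mx_row.
rewrite scat_closed_mul_X scat_closed_mul_M_Q scat_closed_mul_M_P.
congr (row_mx (row_mx _ _) _).
- rewrite mulmxDr mulmxN -scalemxAr mulmxA scat_denom_mul_X -mulmxA scat_denom_mul_V.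
  rewrite mulNmx scat_numer_mul_X opprK scalemxAr -mulmxN -mulmxDr; congr (_ *m _).
  by rewrite opprB scaler_nat mulr2n addrA subrK addrC.
- by rewrite mulNmx mulmxDl mulmxBl !mulNmx A_mul_M_Q oppr0 add0r sub0r opprK.
- by rewrite mulmxN mulNmx mulmxDl mulmxBl -!scalemxAl B_mul_M_P scaler0 addr0 subr0.
Qed.

Lemma scat_denom_unit : - A + z *: B \in unitmx.
Proof.
have : (- A + z *: B) *m row3_mx X M_Q M_P \in unitmx.
  rewrite /row3_mx !mul_mx_row.
  have -> : (- A + z *: B) *m M_Q = z *: (B *m M_Q).
    by rewrite mulmxDl mulNmx A_mul_M_Q oppr0 add0r -scalemxAl.
  have -> : (- A + z *: B) *m M_P = - (A *m M_P).
    by rewrite mulmxDl mulNmx -scalemxAl B_mul_M_P scaler0 addr0.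
  rewrite scat_denom_mul_X B_mul_M_Q A_mul_M_P /emb_m /emb_a /emb_b.
  rewrite !mul_col_mx !mul1mx !mul0mx !add_col_mx !addr0 !add0r.
  rewrite !scale_col_mx !scaler0 !opp_col_mx !oppr0.
  rewrite -block_mxEh block_mxEv row_mx0 -!block_mxEh unitmxE !det_ublock !unitrM.
  rewrite -!unitmxE scat_denom_factor !unitmx_mul !unitmxZ ?unitfE //.
  by rewrite X_gram_unit T_unit G_Q_unit -scaleN1r unitmxZ ?unitrN1 // G_P_unit.
by rewrite unitmx_mul => /andP[].
Qed.

Lemma scat_closedE : scat P Q R S k = E.
Proof.
rewrite /scat -/z -[- A - _]opprK -scat_denom_mul_closed mulmxN opprK.
by rewrite mulKmx ?scat_denom_unit.
Qed.
End ScatteringClosedForm.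

Section Remainder.
Variables (C : numClosedFieldType) (m a b : nat).
Variables (P : 'M[C]_(m, b)) (Q : 'M[C]_(a, b)) (R : 'M[C]_(a, m)) (S : 'M[C]_m).

Local Notation X := (X_PQRS P Q R).
Local Notation Y := (Y_PQRS P Q R).
Local Notation T := (scat_T P Q R S).
Local Notation V := (scat_V P Q R S).

Definition scat_remainder (k : C) (j : nat) : 'M[C]_(m + a + b) :=
  2%:R *: (X *m (T k ^+ j *m V k *m Y) *m adjmx X).

Lemma scat_partialE k N : 1%:M - T k \in unitmx ->
  scat_partial P Q R S k N = scat_closed P Q R S k - scat_remainder k N.+1.
Proof.
move=> T_unit.
have geom : 1%:M + \sum_(1 <= j < N.+1) T k ^+ j = (1%:M - T k ^+ N.+1) *m V k.
  by rewrite -mulmx_geometric_sum mulmxK.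
rewrite /scat_partial.
have -> : \sum_(1 <= j < N.+1) (('i * k)^-1 ^+ j *: (Y *m S) ^+ j) =
          \sum_(1 <= j < N.+1) T k ^+ j.
  by apply: eq_bigr => j _; rewrite -scalemx_exprn.
rewrite /scat_closed /scat_remainder /projmx adjM_Q_mul_M_Q -!addrA.
congr (_ + (_ + _)); rewrite -scalerDr -scalerBr; congr (_ *: _).
rewrite -(mulmxA X _ Y) -mulmxDl -mulmxDr -mulmxBl -mulmxBr; congr (_ *m _ *m _).
by rewrite -[Y in Y + _]mul1mx -mulmxDl geom mulmxBl mul1mx mulmxBl.
Qed.

Lemma scat_closed_sub_limit k : 1%:M - T k \in unitmx ->
  scat_closed P Q R S k - scat_limit P Q R = scat_remainder k 1.
Proof.
move=> T_unit; rewrite scat_limit_proj /scat_closed /scat_remainder expr1.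
rewrite opprD addrACA subrr add0r -scalerBr; congr (_ *: _).
rewrite /projmx -/Y -mulmxBl -mulmxBr; congr (_ *m _ *m _).
by rewrite {1}/V invmx_1B_resolvent // mulmxDl mul1mx addrAC subrr add0r.
Qed.

Definition scat_growth : C := mxnorm (Y *m S).

Definition scat_remainder_const : C :=
  4%:R * mxnorm X * mxnorm (1%:M : 'M[C]_m) * mxnorm Y * mxnorm (adjmx X).

Lemma scat_remainder_const_ge0 : 0 <= scat_remainder_const.
Proof. by rewrite !mulr_ge0 ?mxnorm_ge0 ?ler0n. Qed.

Lemma mxnorm_scat_T k : 0 < k -> mxnorm (T k) = scat_growth / k.
Proof.
by move=> k_gt0; rewrite mxnormZ normfV normrM normCi mul1r gtr0_norm // mulrC.
Qed.

Section LargeFrequency.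
Variable k : C.
Hypotheses (k_gt0 : 0 < k) (k_large : 2%:R * scat_growth < k).

Lemma scat_T_le_half : mxnorm (T k) <= 2^-1.
Proof.
by rewrite mxnorm_scat_T // ler_pdivrMr // ler_pdivlMl ?ltr0n // ltW.
Qed.

Lemma scat_T_unit : 1%:M - T k \in unitmx.
Proof.
apply: unitmx_1B_small; apply: le_lt_trans scat_T_le_half _.
by rewrite invf_lt1 ?ltr1n.
Qed.

Lemma mxnorm_scat_remainder j :
  mxnorm (scat_remainder k j.+1) <= scat_remainder_const * (scat_growth / k) ^+ j.+1.
Proof.
have normV := mxnorm_invmx_1B scat_T_le_half.
have normTj := ler_mxnormX (T k) j; rewrite mxnorm_scat_T // in normTj.
set t := (scat_growth / k) ^+ j.+1.
have norm_prod : mxnorm (X *m (T k ^+ j.+1 *m scat_V P Q R S k *m Y) *m adjmx X)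
    <= mxnorm X * (t * (2%:R * mxnorm (1%:M : 'M[C]_m)) * mxnorm Y) * mxnorm (adjmx X).
  apply: le_trans (ler_mxnormM _ _) _; rewrite ler_wpM2r ?mxnorm_ge0 //.
  apply: le_trans (ler_mxnormM _ _) _; rewrite ler_wpM2l ?mxnorm_ge0 //.
  apply: le_trans (ler_mxnormM _ _) _; rewrite ler_wpM2r ?mxnorm_ge0 //.
  apply: le_trans (ler_mxnormM _ _) _.
  exact: ler_pM (mxnorm_ge0 _) (mxnorm_ge0 _) normTj normV.
rewrite /scat_remainder mxnormZ normr_nat.
have -> : scat_remainder_const * t = 2%:R * (mxnorm X *
    (t * (2%:R * mxnorm (1%:M : 'M[C]_m)) * mxnorm Y) * mxnorm (adjmx X)).
  by rewrite /scat_remainder_const; ring.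
by rewrite ler_wpM2l ?ler0n.
Qed.

Lemma scat_sub_partial N :
  scat P Q R S k - scat_partial P Q R S k N = scat_remainder k N.+1.
Proof.
rewrite scat_partialE ?scat_T_unit // scat_closedE ?scat_T_unit ?gt_eqF //.
by rewrite opprB addrC subrK.
Qed.

Lemma scat_sub_limit : scat P Q R S k - scat_limit P Q R = scat_remainder k 1.
Proof.
by rewrite scat_closedE ?scat_T_unit ?gt_eqF // scat_closed_sub_limit ?scat_T_unit.
Qed.
End LargeFrequency.
End Remainder.

Section Asymptotics.
Variables (C : archiClosedFieldType) (m a b : nat).
Variables (P : 'M[C]_(m, b)) (Q : 'M[C]_(a, b)) (R : 'M[C]_(a, m)) (S : 'M[C]_m).

Local Notation c := (scat_growth P Q R S).
Local Notation K := (scat_remainder_const P Q R).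

Let c_ge0 : 0 <= c. Proof. exact: mxnorm_ge0. Qed.
Let K_ge0 : 0 <= K. Proof. exact: scat_remainder_const_ge0. Qed.

Lemma scat_partial_cvg k : 0 < k -> 2%:R * c < k ->
  mx_cvg (scat_partial P Q R S k) (scat P Q R S k).
Proof.
move=> k_gt0 k_large eps eps_gt0.
exists (Num.bound (K / eps)) => N N_large i j.
rewrite distrC; apply: le_lt_trans (ler_mxnorm_sub_entry _ _ i j) _.
rewrite scat_sub_partial //; apply: le_lt_trans (mxnorm_scat_remainder _ _ _) _ => //.
apply: le_lt_trans (mulr_halfX_lt (n := N.+1) K_ge0 eps_gt0 _).
  rewrite ler_wpM2l // lerXn2r ?nnegrE ?divr_ge0 ?invr_ge0 ?ler0n ?(ltW k_gt0) //.
  by rewrite -mxnorm_scat_T // scat_T_le_half.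
apply: lt_le_trans (archi_boundP _) _; first by rewrite divr_ge0 ?(ltW eps_gt0).
by rewrite ler_nat (leq_trans N_large).
Qed.

Lemma scat_cvg_limit : mx_lim_infty (scat P Q R S) (scat_limit P Q R).
Proof.
move=> eps eps_gt0.
have Kc_ge0 : 0 <= K * c / eps := divr_ge0 (mulr_ge0 K_ge0 c_ge0) (ltW eps_gt0).
exists (2%:R * c + K * c / eps + 1); split.
  by apply: ger0_real; rewrite !addr_ge0 ?ler01 // mulr_ge0 ?ler0n.
move=> k _ k_large i j.
have k_large2 : 2%:R * c < k.
  by apply: le_lt_trans k_large; rewrite -addrA lerDl addr_ge0.
have k_gt0 : 0 < k by apply: le_lt_trans k_large2; rewrite mulr_ge0 ?ler0n.
apply: le_lt_trans (ler_mxnorm_sub_entry _ _ i j) _.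
rewrite scat_sub_limit //; apply: le_lt_trans (mxnorm_scat_remainder _ _ _) _ => //.
rewrite expr1 mulrA ltr_pdivrMr // -ltr_pdivrMl //.
apply: le_lt_trans k_large; rewrite mulrC addrAC lerDr addr_ge0 ?ler01 //.
by rewrite mulr_ge0 ?ler0n.
Qed.
End Asymptotics.

Theorem mainTheorem4 (C : archiClosedFieldType) (m a b : nat)
  (P : 'M[C]_(m, b)) (Q : 'M[C]_(a, b)) (R : 'M[C]_(a, m)) (S : 'M[C]_m) :
  (0 < m)%N ->
  S \in unitmx ->
  adjmx S = S ->
  (exists K : C, K \is Num.real /\
     forall k : C, k \is Num.real -> 0 < k -> K < k ->
       mx_cvg (scat_partial P Q R S k) (scat P Q R S k))
  /\ mx_lim_infty (scat P Q R S) (scat_limit P Q R).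
Proof.
move=> _ _ _; split; last exact: scat_cvg_limit.
exists (2%:R * scat_growth P Q R S); split.
  by rewrite ger0_real // mulr_ge0 ?ler0n ?mxnorm_ge0.
by move=> k _; exact: scat_partial_cvg.
Qed.
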